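(* Let $g>0$ and $n\ge 2$ be an integer, and put $N=n!$. For $x\in(0,1]$ let $\alpha_0(x)\in(0,\pi]$ be defined by $$\cos\Big(\frac{\alpha_0(x)}{2}\Big)=\frac{1-x}{\sqrt{1-2x+2x^2}},$$ and let $T(x)=\frac{2}{g}\ln\Big(\cot\frac{\alpha_0(x)}{4}\Big)$. Then for every integer $s$ with $1\le s\le N$, $$\sum_{i=0}^{\lfloor \log_2 s\rfloor} T\Big(\frac{\lfloor s/2^i\rfloor}{N}\Big)\;\le\;\frac{2}{g}\,\log(2s)\,\Big(\log_2\frac{N}{\sqrt{s}}+1\Big).$$
   Context: $\ln$ and $\log$ denote the natural logarithm and $\log_2$ the base-2 logarithm. $T(x)$ is the nonlinear (Gross–Pitaevskii) evolution time needed to make the single-qubit states $\frac{(N-t)|0\rangle+t|1\rangle}{\sqrt{N^2-2Nt+2t^2}}$ with $t=0$ and $t=xN$ orthogonal. *)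

From Stdlib Require Import Reals Arith Factorial.
Open Scope R_scope.

(* alpha0(x) in (0,pi]: the unique angle with cos(alpha0/2) = (1-x)/sqrt(1-2x+2x^2);
   since alpha0/2 lies in [0,pi], alpha0/2 = acos of that ratio. *)
Definition alpha0 (x : R) : R :=
  2 * acos ((1 - x) / sqrt (1 - 2 * x + 2 * x ^ 2)).

Definition cot (t : R) : R := cos t / sin t.

Definition T (g x : R) : R := (2 / g) * ln (cot (alpha0 x / 4)).

Definition log2R (y : R) : R := ln y / ln 2.

From Stdlib Require Import Reals Arith Factorial Lra Lia Psatz.
From Coquelicot Require Import Rcomplements.
Open Scope R_scope.

(* alpha0(x)/2 is the polar angle of the point (1 - x, x), so the half-angle formula gives
   cot (alpha0 x / 4) = (sqrt ((1-x)^2 + x^2) + 1 - x) / x <= 2 / x, i.e. T(x) <= (2/g) ln (2/x).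
   For s / 2^i >= 2^(L-i), with L = log2 s, the i-th term is then at most
   (2/g) (ln (2N) - (L - i) ln 2); these bounds are affine in i, and their sum
   (2/g) (L+1) (ln (2N) - L ln 2 / 2) is increasing in L ln 2 <= ln s, which yields the claim. *)

Lemma cot_half t : 0 < t < PI -> cot (t / 2) = (1 + cos t) / sin t.
Proof.
  intros Ht.
  assert (Hs : 0 < sin (t / 2)) by (apply sin_gt_0; lra).
  assert (Hc : 0 < cos (t / 2)) by (apply cos_gt_0; lra).
  replace t with (2 * (t / 2)) at 2 3 by field.
  rewrite sin_2a, cos_2a_cos. unfold cot. field. lra.
Qed.

Lemma cot_half_polar_angle a b : 0 < b ->
  cot (acos (a / sqrt (a² + b²)) / 2) = (sqrt (a² + b²) + a) / b.
Proof.
  intros Hb.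
  set (r := sqrt (a² + b²)).
  assert (Hr : 0 < r) by (apply sqrt_lt_R0; unfold Rsqr; nra).
  assert (Hrr : r * r = a² + b²) by (apply sqrt_sqrt; unfold Rsqr; nra).
  assert (Hc : -1 <= a / r <= 1).
  { unfold Rsqr in Hrr.
    split; apply Rmult_le_reg_r with r; try lra; field_simplify; nra. }
  assert (Hsin : sin (acos (a / r)) = b / r).
  { rewrite sin_acos by exact Hc.
    replace (1 - (a / r)²) with ((b / r)²).
    - apply sqrt_Rsqr. apply Rdiv_le_0_compat; lra.
    - apply Rmult_eq_reg_r with (r * r); [|nra].
      unfold Rsqr in *. field_simplify; try lra. }
  assert (Hangle : 0 < acos (a / r) < PI).
  { destruct (acos_bound (a / r)) as [H0 HPI].
    assert (0 < sin (acos (a / r))) by (rewrite Hsin; apply Rdiv_lt_0_compat; lra).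
    split.
    - destruct H0 as [|E]; [lra|]. rewrite <- E, sin_0 in *. lra.
    - destruct HPI as [|E]; [lra|]. rewrite E, sin_PI in *. lra. }
  rewrite cot_half, cos_acos, Hsin by assumption.
  field. lra.
Qed.

Lemma cot_alpha0_quarter x : 0 < x ->
  cot (alpha0 x / 4) = (sqrt ((1 - x)² + x²) + (1 - x)) / x.
Proof.
  intros Hx.
  rewrite <- cot_half_polar_angle by exact Hx.
  unfold alpha0. f_equal.
  replace (1 - 2 * x + 2 * x ^ 2) with ((1 - x)² + x²) by (unfold Rsqr; ring).
  field.
Qed.

Lemma T_le_ln g x : 0 < g -> 0 < x <= 1 -> T g x <= 2 / g * ln (2 / x).
Proof.
  intros Hg Hx.
  assert (Hq : sqrt ((1 - x)² + x²) <= 1 + x).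
  { rewrite <- (sqrt_Rsqr (1 + x)) by lra.
    apply sqrt_le_1_alt. unfold Rsqr. nra. }
  assert (Hq0 : 0 < sqrt ((1 - x)² + x²)) by (apply sqrt_lt_R0; unfold Rsqr; nra).
  unfold T. apply Rmult_le_compat_l; [apply Rdiv_le_0_compat; lra|].
  rewrite cot_alpha0_quarter by lra.
  apply ln_le.
  - apply Rdiv_lt_0_compat; lra.
  - apply Rmult_le_compat_r; [apply Rlt_le, Rinv_0_lt_compat|]; lra.
Qed.

Lemma T_ratio_le g k N : 0 < g -> 1 <= k <= N ->
  T g (k / N) <= 2 / g * (ln (2 * N) - ln k).
Proof.
  intros Hg Hk.
  eapply Rle_trans.
  - apply T_le_ln; [exact Hg|]. split.
    + apply Rdiv_lt_0_compat; lra.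
    + apply Rmult_le_reg_r with N; [lra|]. field_simplify; lra.
  - replace (2 / (k / N)) with (2 * N / k) by (field; lra).
    rewrite ln_div by lra. lra.
Qed.

Lemma pow_sub_le_div_pow b L i s : (0 < b)%nat -> (b ^ L <= s)%nat -> (i <= L)%nat ->
  (b ^ (L - i) <= s / b ^ i)%nat.
Proof.
  intros Hb HL Hi.
  apply Nat.div_le_lower_bound; [apply Nat.pow_nonzero; lia|].
  rewrite <- Nat.pow_add_r. replace (i + (L - i))%nat with L by lia. exact HL.
Qed.

Lemma ln_INR_pow2 m : ln (INR (2 ^ m)) = INR m * ln 2.
Proof. rewrite pow_INR. apply ln_pow. simpl; lra. Qed.

Lemma T_halving_le g N s i : 0 < g -> (1 <= s <= N)%nat -> (i <= Nat.log2 s)%nat ->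
  T g (INR (s / 2 ^ i) / INR N)
  <= 2 / g * ((ln (2 * INR N) - INR (Nat.log2 s) * ln 2) + ln 2 * INR i).
Proof.
  intros Hg Hs Hi.
  set (L := Nat.log2 s) in *.
  assert (HL : (2 ^ L <= s)%nat) by (apply Nat.log2_spec; lia).
  assert (Hk : (2 ^ (L - i) <= s / 2 ^ i)%nat) by (apply pow_sub_le_div_pow; lia).
  assert (Hpow : 1 <= INR (2 ^ (L - i))).
  { apply (le_INR 1). pose proof (Nat.pow_nonzero 2 (L - i)). lia. }
  assert (HkN : (s / 2 ^ i <= N)%nat).
  { pose proof (Nat.pow_nonzero 2 i).
    apply Nat.le_trans with s; [apply Nat.Div0.div_le_upper_bound|]; nia. }
  apply le_INR in Hk, HkN.
  eapply Rle_trans; [apply T_ratio_le; [exact Hg | lra]|].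
  apply Rmult_le_compat_l; [apply Rdiv_le_0_compat; lra|].
  assert (Hln : ln (INR (2 ^ (L - i))) <= ln (INR (s / 2 ^ i))) by (apply ln_le; lra).
  rewrite ln_INR_pow2, minus_INR in Hln by exact Hi.
  lra.
Qed.

Lemma sum_affine a b M :
  sum_f_R0 (fun i => a + b * INR i) M = (INR M + 1) * (a + b * INR M / 2).
Proof.
  induction M as [|M IH].
  - cbn [sum_f_R0 INR]. field.
  - cbn [sum_f_R0]. rewrite IH, S_INR. field.
Qed.

Lemma ln_sqrt x : 0 < x -> ln (sqrt x) = ln x / 2.
Proof.
  intros Hx.
  assert (Hs : 0 < sqrt x) by (apply sqrt_lt_R0; exact Hx).
  rewrite <- (sqrt_sqrt x) at 2 by lra.
  rewrite ln_mult by exact Hs. field.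
Qed.

Lemma affine_bound_sum_le s N L : 1 <= s <= N -> 0 <= L -> L * ln 2 <= ln s ->
  (L + 1) * (ln (2 * N) - L * ln 2 + ln 2 * L / 2) <= ln (2 * s) * (log2R (N / sqrt s) + 1).
Proof.
  intros Hs HL HLs.
  assert (Hp : 0 < ln 2) by (pose proof ln_lt_2; lra).
  assert (HsN : ln s <= ln N) by (apply ln_le; lra).
  unfold log2R.
  rewrite !ln_mult, ln_div, ln_sqrt by (try apply sqrt_lt_R0; lra).
  set (p := ln 2) in *. set (m := L * p) in *.
  apply Rmult_le_reg_r with p; [exact Hp|].
  replace ((L + 1) * (p + ln N - m + p * L / 2) * p) with ((m + p) * (p + ln N - m / 2))
    by (unfold m; field).
  replace ((p + ln s) * ((ln N - ln s / 2) / p + 1) * p)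
    with ((ln s + p) * (p + ln N - ln s / 2)) by (field; lra).
  (* the quadratic (m + p) (p + ln N - m / 2) is increasing for m <= ln N + p / 2 *)
  assert (0 <= (ln s - m) * (p / 2 + ln N - (ln s + m) / 2))
    by (apply Rmult_le_pos; unfold m in *; nra).
  nra.
Qed.

Theorem lemma1 (g : R) (n : nat) (hg : 0 < g) (hn : (2 <= n)%nat)
  (s : nat) (hs1 : (1 <= s)%nat) (hs2 : (s <= fact n)%nat) :
  sum_f_R0 (fun i => T g (INR (s / 2 ^ i) / INR (fact n))) (Nat.log2 s)
  <= (2 / g) * ln (2 * INR s) * (log2R (INR (fact n) / sqrt (INR s)) + 1).
Proof.
  eapply Rle_trans; [apply sum_Rle; intros i Hi; apply T_halving_le; [exact hg | lia | exact Hi]|].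
  set (L := Nat.log2 s).
  assert (HL : (2 ^ L <= s)%nat) by (apply Nat.log2_spec; lia).
  erewrite sum_eq by (intros; apply Rmult_comm).
  rewrite <- scal_sum, sum_affine.
  rewrite (Rmult_assoc (2 / g)).
  apply Rmult_le_compat_l; [apply Rdiv_le_0_compat; lra|].
  apply affine_bound_sum_le.
  - split; apply le_INR in hs1, hs2; simpl in hs1; lra.
  - apply pos_INR.
  - rewrite <- ln_INR_pow2. apply ln_le.
    + apply lt_0_INR. pose proof (Nat.pow_nonzero 2 L). lia.
    + apply le_INR, HL.
Qed.
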